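(* Let $f:X\to Y$ be continuous and let $\Phi:Y\times[0,1]\to Z$ be a proper homotopy (a homotopy that is proper as a map). Then $L(\Phi\circ(f\times\mathrm{id}_{[0,1]}))=\Phi(L(f)\times[0,1])$.
   Context: All topological spaces are Hausdorff, second countable and locally compact. A continuous map is proper if preimages of compact sets are compact. The limit set $L(f)$ of a continuous map $f:X\to Y$ is the set of all $y\in Y$ for which there is a sequence $(x_n)$ in $X$ with no limit points in $X$ such that $f(x_n)\to y$. *)

From HB Require Import structures.
From mathcomp Require Import all_boot all_order all_algebra.
From mathcomp Require Import all_classical all_reals all_analysis.
From mathcomp Require Import subtype_topology.
Set Implicit Arguments. Unset Strict Implicit. Unset Printing Implicit Defensive.
Import Order.TTheory GRing.Theory Num.Theory.
Import numFieldTopology.Exports.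
Local Open Scope classical_set_scope.
Local Open Scope ring_scope.

Definition nice_space (T : topologicalType) : Prop :=
  [/\ hausdorff_space T, @second_countable T & locally_compact [set: T]].

Definition proper_map (S T : topologicalType) (f : S -> T) : Prop :=
  continuous f /\ forall K : set T, compact K -> compact (f @^-1` K).

Definition limit_set (S T : topologicalType) (f : S -> T) : set T :=
  [set y | exists u : nat -> S,
      cluster (u @ \oo) = set0 /\ (f \o u) @ \oo --> y].

Notation unit_interval R := (set_type (`[0, 1]%classic : set R)).

From HB Require Import structures.
From mathcomp Require Import all_boot all_order all_algebra.
From mathcomp Require Import all_classical all_reals all_analysis.
From mathcomp Require Import subtype_topology.
Import numFieldTopology.Exports.
Local Open Scope classical_set_scope.
Local Open Scope ring_scope.

(* If [Phi (f x_n, t_n)] converges to [z] while [(x_n, t_n)] has no cluster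
   point, then [(f x_n, t_n)] eventually lies in the compact set [Phi^-1 K],
   [K] a compact neighbourhood of [z], hence clusters at some [(y, t)] with
   [Phi (y, t) = z].  By second countability a subsequence of [f x_n] tends to
   [y], and the corresponding subsequence of [x_n] has no cluster point: a
   cluster point [x], together with a cluster point [s] of a further
   subsequence of [t_n], would make [(x, s)] a cluster point of [(x_n, t_n)].
   The reverse inclusion only uses the continuity of [Phi]. *)

Lemma cvg_subseq_oo (phi : nat -> nat) :
  (forall n, n <= phi n)%N -> phi @ \oo --> \oo.
Proof.
move=> phi_ge A [N _ NA]; exists N => // n /= Nn.
exact/NA/(leq_trans Nn (phi_ge n)).
Qed.

Section cluster.
Context {T : topologicalType}.

Lemma cluster_subseq {u : nat -> T} {phi : nat -> nat} :
  phi @ \oo --> \oo -> cluster ((u \o phi) @ \oo) `<=` cluster (u @ \oo).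
Proof. by move=> phi_oo; apply: cvg_cluster; apply: cvg_comp phi_oo _. Qed.

Lemma cluster_map {S : topologicalType} {g : T -> S} {F : set_system T} {p : T} :
  {for p, continuous g} -> cluster F p -> cluster (g @ F) (g p).
Proof.
move=> gp Fp A B FA Bgp.
by have [q [Aq Bq]] := Fp _ _ FA (gp _ Bgp); exists (g q).
Qed.

Lemma second_countable_nbhs_countable_base : @second_countable T ->
  forall p : T, exists D : nat -> set T,
    [/\ forall k, nbhs p (D k), forall j k, (j <= k)%N -> D k `<=` D j &
        forall A, nbhs p A -> exists k, D k `<=` A].
Proof.
move=> [B /countable_injP [e e_inj] [B_open B_basis]] p.
(* By injectivity of [e], [V j] is the basic neighbourhood of [p] indexed by
   [j], or [setT] if there is none. *)
pose V j := \bigcap_(U in [set U | [/\ B U, U p & e U = j]]) U.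
have V_nbhs j : nbhs p (V j).
  have [[U0 [BU0 U0p eU0]]|no_U] := pselect (exists U, [/\ B U, U p & e U = j]).
    apply: (@filterS _ _ _ U0); last by apply: open_nbhs_nbhs; split=> //; exact: B_open.
    move=> q U0q U [BU Up eU]; suff -> : U = U0 by [].
    by apply: e_inj; rewrite ?inE // eU eU0.
  apply: filterS filterT => q _ U [BU Up eU].
  by exfalso; apply: no_U; exists U.
exists (fun k => [set q | forall j, (j <= k)%N -> V j q]); split.
- elim=> [|k ih].
    by apply: filterS (V_nbhs 0%N) => q V0q j; rewrite leqn0 => /eqP ->.
  apply: filterS (filterI ih (V_nbhs k.+1)) => q [Dq Vq] j.
  by rewrite leq_eqVlt => /orP [/eqP -> //|]; rewrite ltnS; exact: Dq.
- by move=> j k jk q Dq i ij; apply: Dq; exact: leq_trans ij jk.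
- move=> A /(B_basis p) [U [BU Up] UA]; exists (e U) => q /(_ (e U) (leqnn _)).
  by move=> /(_ U (And3 BU Up erefl)); exact: UA.
Qed.

Lemma second_countable_cluster_subseq {u : nat -> T} {p : T} :
  @second_countable T -> cluster (u @ \oo) p ->
  exists2 phi : nat -> nat, phi @ \oo --> \oo & (u \o phi) @ \oo --> p.
Proof.
move=> /second_countable_nbhs_countable_base/(_ p) [D [D_nbhs D_decr D_base]] up.
have /choice [phi phiP] : forall k, exists n, (k <= n)%N /\ D k (u n).
  move=> k.
  have uk : (u @ \oo) (u @` [set n | (k <= n)%N]) by exists k => // n /= kn; exists n.
  by have [_ [[n /= kn <-] Dun]] := up _ _ uk (D_nbhs k); exists n.
exists phi; first by apply: cvg_subseq_oo => k; case: (phiP k).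
move=> A /D_base [k DkA]; exists k => // n /= kn.
by apply/DkA/(D_decr _ _ kn); case: (phiP n).
Qed.

End cluster.

Lemma cluster_pair {S A B : topologicalType} {F : set_system S} {FF : Filter F}
    (w : S -> A * B) (x : A) (s : B) :
  (fst \o w) @ F --> x -> cluster ((snd \o w) @ F) s ->
  cluster (w @ F) (x, s).
Proof.
move=> wx ws W N Fw [[N1 N2] [N1x N2s] N12].
pose E := [set n | W (w n) /\ N1 (w n).1].
have FE : F ((snd \o w) @^-1` ((snd \o w) @` E)).
  have FE' : F E by apply: filterI; [exact: Fw|exact: wx].
  by apply: filterS FE' => n En; exists n.
have [_ [[n [Wn N1n] <-] N2n]] := ws _ _ FE N2s.
by exists (w n); split => //; apply: N12; split.
Qed.

Lemma proper_map_cvg_cluster {S T : topologicalType} {g : S -> T} {F : set_system S}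
    {PF : ProperFilter F} {z : T} :
  proper_map g -> hausdorff_space T -> locally_compact [set: T] ->
  g @ F --> z -> exists2 w, cluster F w & g w = z.
Proof.
move=> [g_cont g_compact] T_haus T_lc gz.
have [K Kz [K_compact _]] := T_lc z I.
have FK : F (g @^-1` K) by apply: gz; move: Kz; rewrite withinET.
have [w [_ Fw]] := g_compact K K_compact F PF FK.
exists w => //; apply/esym/T_haus; apply: (cvg_cluster gz).
exact: cluster_map (g_cont w) Fw.
Qed.

Section limit_set_homotopy.
Context {X Y I Z : topologicalType} (f : X -> Y) (Phi : Y * I -> Z).

Lemma image_limit_set_subset : continuous Phi ->
  Phi @` (limit_set f `*` [set: I]) `<=` limit_set (fun p : X * I => Phi (f p.1, p.2)).
Proof.
move=> Phi_cont _ [[y t] [[u [u_cl fu_y]] _] <-].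
exists (fun n => (u n, t)); split.
  rewrite -subset0 => -[x s] /(cluster_map (g := fst) cvg_fst) /=.
  by rewrite u_cl.
have fut_yt : (fun n => (f (u n), t)) @ \oo --> (y, t).
  by apply: cvg_pair => //; exact: cvg_cst.
exact: cvg_comp _ _ fut_yt (Phi_cont (y, t)).
Qed.

Lemma limit_set_subset_image :
  @second_countable X -> @second_countable Y ->
  hausdorff_space Z -> locally_compact [set: Z] -> proper_map Phi ->
  limit_set (fun p : X * I => Phi (f p.1, p.2)) `<=` Phi @` (limit_set f `*` [set: I]).
Proof.
move=> X_sc Y_sc Z_haus Z_lc Phi_proper z [u [u_cl Phiu_z]].
pose v n := (f (u n).1, (u n).2).
have [[y t] v_yt <-] := proper_map_cvg_cluster (F := v @ \oo) Phi_proper Z_haus Z_lc Phiu_z.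
exists (y, t) => //; split => //.
have fu_y : cluster ((f \o fst \o u) @ \oo) y by exact: (cluster_map (g := fst) cvg_fst v_yt).
have [phi phi_oo fuphi_y] := second_countable_cluster_subseq Y_sc fu_y.
exists (fst \o u \o phi); split => //.
rewrite -subset0 => x /(second_countable_cluster_subseq X_sc) [psi psi_oo u_x].
have rho_oo : (phi \o psi) @ \oo --> \oo := cvg_comp _ _ psi_oo phi_oo.
have [[y' s] vrho_ys _] := proper_map_cvg_cluster (F := (v \o (phi \o psi)) @ \oo)
  Phi_proper Z_haus Z_lc (cvg_comp _ _ rho_oo Phiu_z).
have urho_xs : cluster ((u \o (phi \o psi)) @ \oo) (x, s).
  apply: cluster_pair u_x _.
  by apply: (cluster_map (g := snd)) vrho_ys; exact: cvg_snd.
by have := cluster_subseq rho_oo _ urho_xs; rewrite u_cl.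
Qed.

End limit_set_homotopy.

Theorem corollary5 (R : realType) (X Y Z : topologicalType)
  (hX : nice_space X) (hY : nice_space Y) (hZ : nice_space Z)
  (f : X -> Y) (f_cont : continuous f)
  (Phi : (Y * unit_interval R)%type -> Z) (Phi_proper : proper_map Phi) :
  limit_set (fun p : (X * unit_interval R)%type => Phi (f p.1, p.2)) =
  Phi @` (limit_set f `*` [set: unit_interval R]).
Proof.
case: hX hY hZ => _ X_sc _ [_ Y_sc _] [Z_haus _ Z_lc].
apply/seteqP; split.
- exact: limit_set_subset_image.
- exact/image_limit_set_subset/Phi_proper.1.
Qed.
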